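(* Let $C$ be a directed cycle on a finite vertex set, and for vertices $a,b$ let $c(a,b)$ be the number of edges of the directed path along $C$ from $a$ to $b$ ($c(a,a)=0$). Let $a_1,\dots,a_Q$ (sources) and $b_1,\dots,b_Q$ (sinks) be vertices of $C$ (repetitions allowed). The cost of a bijection $\sigma:[Q]\to[Q]$ (pairing $a_i$ with $b_{\sigma(i)}$) is $\sum_{i=1}^Q c(a_i,b_{\sigma(i)})$. Consider the algorithm GREEDY which, while unpaired elements remain, picks an arbitrary unpaired source $a_i$ and pairs it with an unpaired sink $b_j$ minimizing $c(a_i,b_j)$, or picks an arbitrary unpaired sink $b_j$ and pairs it with an unpaired source $a_i$ minimizing $c(a_i,b_j)$. Then every pairing produced by GREEDY has minimum cost among all bijections. *)

From mathcomp Require Import all_boot all_order all_fingroup.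
Set Implicit Arguments. Unset Strict Implicit. Unset Printing Implicit Defensive.

(* The directed cycle on vertex set 'I_n: edges v -> v+1 (mod n).
   cyc_dist n u v = number of edges of the directed path along the cycle
   from u to v (0 when u = v). *)
Definition cyc_dist (n : nat) (u v : 'I_n) : nat := (v + n - u) %% n.

Section Greedy.
Variables (n Q : nat) (a b : 'I_Q -> 'I_n).

Definition pairing_cost (sigma : 'S_Q) : nat :=
  \sum_(i < Q) cyc_dist (a i) (b (sigma i)).

(* Partial pairing state: p i = Some j means source a_i is paired with sink b_j. *)
Definition sink_unpaired (p : {ffun 'I_Q -> option 'I_Q}) (j : 'I_Q) : bool :=
  [forall i, p i != Some j].

Definition pair_up (p : {ffun 'I_Q -> option 'I_Q}) (i j : 'I_Q)
  : {ffun 'I_Q -> option 'I_Q} :=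
  [ffun k => if k == i then Some j else p k].

Inductive greedy_reach : {ffun 'I_Q -> option 'I_Q} -> Prop :=
  | greedy_start : greedy_reach [ffun => None]
  | greedy_src p i j :
      greedy_reach p -> p i = None -> sink_unpaired p j ->
      (forall j', sink_unpaired p j' ->
         cyc_dist (a i) (b j) <= cyc_dist (a i) (b j')) ->
      greedy_reach (pair_up p i j)
  | greedy_snk p i j :
      greedy_reach p -> p i = None -> sink_unpaired p j ->
      (forall i', p i' = None ->
         cyc_dist (a i) (b j) <= cyc_dist (a i') (b j)) ->
      greedy_reach (pair_up p i j).

Definition greedy_output (sigma : 'S_Q) : Prop :=
  greedy_reach [ffun i => Some (sigma i)].

End Greedy.

From mathcomp Require Import all_boot all_order all_fingroup zify.

Set Implicit Arguments.
Unset Strict Implicit.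
Unset Printing Implicit Defensive.

(* The proof is an exchange argument.  First, the cyclic distance
   c(u,v) = (v - u) mod n satisfies the triangle inequality, with equality
   c(u,w) = c(u,v) + c(v,w) as soon as c(u,v) <= c(u,w) or c(v,w) <= c(u,w)
   (then v lies on the path from u to w).  This yields two "Monge" exchange
   inequalities: if y is a nearest sink of x (resp. x a nearest source of y),
   then c(x,y) + c(x',y') <= c(x,y') + c(x',y) for all other x', y'.

   Second, along any run of GREEDY we maintain the invariant that the
   current partial pairing extends to an optimal bijection tau.  When GREEDY
   pairs i with j but tau pairs i with j0 and i0 with j, replacing tau by
   tau composed with the transposition (i i0) does not increase the cost by
   the exchange inequality, so the invariant survives.  A finished run
   pairs everything, so its output is that optimal bijection. *)

Section CyclicDistance.
Variable n : nat.
Implicit Types u v w x y : 'I_n.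

Lemma cyc_dist_lt u v : cyc_dist u v < n.
Proof. by rewrite ltn_mod (leq_ltn_trans _ (ltn_ord u)). Qed.

Lemma cyc_dist_modD u v w : (cyc_dist u v + cyc_dist v w) %% n = cyc_dist u w.
Proof.
rewrite /cyc_dist modnDm.
have u_lt := ltn_ord u; have v_lt := ltn_ord v; have w_lt := ltn_ord w.
have -> : v + n - u + (w + n - v) = (w + n - u) + n by lia.
by rewrite modnDr.
Qed.

Lemma cyc_dist_addE u v w :
  cyc_dist u v + cyc_dist v w = cyc_dist u w \/
  cyc_dist u v + cyc_dist v w = cyc_dist u w + n.
Proof.
have uv := cyc_dist_lt u v; have vw := cyc_dist_lt v w.
rewrite -(cyc_dist_modD u v w); set s := _ + _.
have s_div : s %/ n < 2 by rewrite ltn_divLR; lia.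
have := divn_eq s n; case: (s %/ n) s_div => [|[|]] // _ s_eq; [left | right]; lia.
Qed.

Lemma cyc_dist_triangle u v w : cyc_dist u w <= cyc_dist u v + cyc_dist v w.
Proof. by case: (cyc_dist_addE u v w) => ->; rewrite ?leq_addr. Qed.

Lemma cyc_dist_splitl u v w :
  cyc_dist u v <= cyc_dist u w -> cyc_dist u w = cyc_dist u v + cyc_dist v w.
Proof. have := cyc_dist_lt v w; case: (cyc_dist_addE u v w); lia. Qed.

Lemma cyc_dist_splitr u v w :
  cyc_dist v w <= cyc_dist u w -> cyc_dist u w = cyc_dist u v + cyc_dist v w.
Proof. have := cyc_dist_lt u v; case: (cyc_dist_addE u v w); lia. Qed.

Lemma cyc_exchange_src x x' y y' : cyc_dist x y <= cyc_dist x y' ->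
  cyc_dist x y + cyc_dist x' y' <= cyc_dist x y' + cyc_dist x' y.
Proof.
move=> /cyc_dist_splitl ->; rewrite -addnA leq_add2l addnC.
exact: cyc_dist_triangle.
Qed.

Lemma cyc_exchange_snk x x' y y' : cyc_dist x y <= cyc_dist x' y ->
  cyc_dist x y + cyc_dist x' y' <= cyc_dist x y' + cyc_dist x' y.
Proof.
move=> /cyc_dist_splitr ->; rewrite addnA [leqRHS]addnC leq_add2l addnC.
exact: cyc_dist_triangle.
Qed.

End CyclicDistance.

Section ExchangeArgument.
Variables (n Q : nat) (a b : 'I_Q -> 'I_n).
Local Notation c i j := (cyc_dist (a i) (b j)).
Local Notation cost := (pairing_cost a b).
Local Notation state := {ffun 'I_Q -> option 'I_Q}.

(* Swapping the sinks of sources i and i' changes only two terms of the cost. *)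
Lemma cost_tperm (tau : 'S_Q) i i' : i != i' ->
  cost (tperm i i' * tau)%g + c i (tau i) + c i' (tau i') =
  cost tau + c i (tau i') + c i' (tau i).
Proof.
move=> ne_ii'; rewrite /pairing_cost.
rewrite [in LHS](bigD1 i) // [in LHS](bigD1 i') 1?eq_sym //=.
rewrite [in RHS](bigD1 i) // [in RHS](bigD1 i') 1?eq_sym //=.
rewrite !permM tpermL tpermR.
rewrite (eq_bigr (fun k => c k (tau k))); last first.
  by move=> k /andP[ne_ki ne_ki']; rewrite permM tpermD // eq_sym.
lia.
Qed.

Definition optimal (tau : 'S_Q) : Prop := forall tau', cost tau <= cost tau'.

Definition extends (p : state) (tau : 'S_Q) : Prop :=
  forall i j, p i = Some j -> tau i = j.

Lemma optimal_exists : exists tau, optimal tau.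
Proof.
exists [arg min_(tau < 1%g) cost tau].
by case: arg_minnP => // tau _ tau_min tau'; apply: tau_min.
Qed.

Lemma extends_sink_unpaired p tau i :
  extends p tau -> p i = None -> sink_unpaired p (tau i).
Proof.
move=> ext p_i; apply/forallP => k; apply/eqP => p_k.
by move: p_i; rewrite -(perm_inj (ext _ _ p_k)) p_k.
Qed.

Lemma extends_source_unpaired p tau j :
  extends p tau -> sink_unpaired p j -> p ((tau^-1)%g j) = None.
Proof.
move=> ext /forallP/(_ ((tau^-1)%g j)).
by case p_k: (p _) => [j'|] // /eqP[]; rewrite -(ext _ _ p_k) permKV.
Qed.

Lemma optimal_extend p tau i j :
  optimal tau -> extends p tau -> p i = None -> sink_unpaired p j ->
  (forall i' j', p i' = None -> sink_unpaired p j' ->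
     c i j + c i' j' <= c i j' + c i' j) ->
  exists tau', optimal tau' /\ extends (pair_up p i j) tau'.
Proof.
move=> opt ext p_i free_j exch.
have ext_pair (t : 'S_Q) : t i = j ->
    (forall k, k != i -> p k != None -> t k = tau k) -> extends (pair_up p i j) t.
  move=> t_i t_k k j'; rewrite ffunE; case: eqVneq => [-> [<-] //| ne_ki p_k].
  by rewrite t_k ?p_k //; apply: ext.
have [tau_i | ne_tau_i] := eqVneq (tau i) j.
  by exists tau; split; last by apply: ext_pair.
pose i' := (tau^-1)%g j.
have tau_i' : tau i' = j by rewrite permKV.
have ne_ii' : i != i' by apply: contra_neq ne_tau_i => ->.
have exch_ii' : c i (tau i') + c i' (tau i) <= c i (tau i) + c i' (tau i').
  rewrite tau_i'; apply: exch.
  - exact: extends_source_unpaired.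
  - exact: extends_sink_unpaired.
have swap_le : cost (tperm i i' * tau) <= cost tau.
  rewrite -(leq_add2r (c i (tau i) + c i' (tau i'))) addnA cost_tperm //.
  by rewrite -addnA leq_add2l.
exists (tperm i i' * tau)%g; split; first by move=> t; apply: leq_trans (opt t).
apply: ext_pair => [|k ne_ki p_k]; first by rewrite permM tpermL.
rewrite permM tpermD // 1?eq_sym //.
by apply: contra p_k => /eqP ->; rewrite extends_source_unpaired.
Qed.

(* Every state reachable by GREEDY extends to an optimal bijection: both
   kinds of greedy choice satisfy the exchange inequality. *)
Lemma greedy_invariant p :
  greedy_reach a b p -> exists tau, optimal tau /\ extends p tau.
Proof.
elim=> [|p' i j _ [tau [opt ext]] p_i free_j j_min
        |p' i j _ [tau [opt ext]] p_i free_j i_min].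
- have [tau opt] := optimal_exists.
  by exists tau; split=> // k j; rewrite ffunE.
- apply: optimal_extend opt ext p_i free_j _ => i' j' _ free_j'.
  by apply: cyc_exchange_src; apply: j_min.
- apply: optimal_extend opt ext p_i free_j _ => i' j' p_i' _.
  by apply: cyc_exchange_snk; apply: i_min.
Qed.

End ExchangeArgument.

Theorem mainTheorem9 (n Q : nat) (a b : 'I_Q -> 'I_n) (sigma : 'S_Q) :
  greedy_output a b sigma ->
  forall tau : 'S_Q, pairing_cost a b sigma <= pairing_cost a b tau.
Proof.
move=> /greedy_invariant[tau [opt ext]].
have -> : sigma = tau by apply/permP => k; apply/esym/ext; rewrite ffunE.
exact: opt.
Qed.
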